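(* Let $t\mapsto\zeta(t)=(\xi(t),\eta(t))$, $t\in I$, be a solution of the unperturbed system $(\mathrm P_0)$ such that $\epsilon(t)\neq0$, $n^j(t)\neq0$ and $V^j(t)\neq0$ for all $j\in\{1,\dots,S\}$ and all $t\in I$. Then the Jacobian $D_\eta g_0(\zeta(t))$ is singular for every $t\in I$.
   Context: Fix integers $S\ge 2$, $C\ge 2$ and an interval $I\subset\mathbb R$. Given are continuously differentiable real functions $f_{\mathrm{vle},i}(P,T,\mathbf x)$ ($i=1,\dots,C$), $f_{\mathrm{hl}}(T,\mathbf x)$, $f_{\mathrm{hv}}(T,\mathbf y)$, $f_{\mathrm{holdup}}(L)$. Controls are continuously differentiable real functions $\epsilon,P,Q,T^{\mathrm{cond}}$ on $I$. State variables: $n^j,H^j,T^j,V^j$, $\mathbf x^j,\mathbf y^j\in\mathbb R^C$ ($j=1,\dots,S$), $L^j$ ($j=1,\dots,S-1$); a solution is a tuple of continuously differentiable state functions satisfying all equations at every $t\in I$. ''$2\le j\le S-1$'' marks middle-stage equations. The system $(\mathrm P_0)$ consists of: (TM) $\dot n^1=L^1-V^1$; $\dot n^j=L^j-V^j-L^{j-1}+V^{j-1}$ ($2\le j\le S-1$); $\dot n^S=-\epsilon V^S-L^{S-1}+V^{S-1}$; (CM$_0$) for $i=1,\dots,C-1$: $\dot x_i^1=\big(L^1(x_i^2-x_i^1)-V^1(y_i^1-x_i^1)\big)/n^1$; $\dot x_i^j=\big(L^j(x_i^{j+1}-x_i^j)-V^j(y_i^j-x_i^j)+V^{j-1}(y_i^{j-1}-x_i^j)\big)/n^j$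 ($2\le j\le S-1$); $\dot x_i^S=\big(\epsilon V^S(x_i^S-y_i^S)+V^{S-1}(y_i^{S-1}-x_i^S)\big)/n^S$; (EB) $\dot H^1=L^1f_{\mathrm{hl}}(T^2,\mathbf x^2)-V^1f_{\mathrm{hv}}(T^1,\mathbf y^1)+Q$; $\dot H^j=L^jf_{\mathrm{hl}}(T^{j+1},\mathbf x^{j+1})-V^jf_{\mathrm{hv}}(T^j,\mathbf y^j)-L^{j-1}f_{\mathrm{hl}}(T^j,\mathbf x^j)+V^{j-1}f_{\mathrm{hv}}(T^{j-1},\mathbf y^{j-1})$ ($2\le j\le S-1$); $\dot H^S=(1-\epsilon)V^Sf_{\mathrm{hl}}(T^{\mathrm{cond}},\mathbf y^S)-V^Sf_{\mathrm{hv}}(T^S,\mathbf y^S)-L^{S-1}f_{\mathrm{hl}}(T^S,\mathbf x^S)+V^{S-1}f_{\mathrm{hv}}(T^{S-1},\mathbf y^{S-1})$; and the algebraic equations $g_0=0$, where, with $\delta_i^j:=0$: $\mathrm{aux}^1_\delta=\sum_{i=1}^C\big(L^1(x_i^2-x_i^1-\delta_i^1)-V^1(y_i^1-x_i^1-\delta_i^1)\big)/n^1$; for $2\le j\le S-1$, $\mathrm{aux}^j_\delta=\sum_{i=1}^C\big(L^j(x_i^{j+1}-x_i^j-\delta_i^j)-V^j(y_i^j-x_i^j-\delta_i^j)+V^{j-1}(y_i^{j-1}-x_i^j-\delta_i^j)\big)/n^j$; $\mathrm{aux}^S_\delta=\sum_{i=1}^C\big(\epsilon V^S(x_i^S+\delta_i^S-y_i^S)+V^{S-1}(y_i^{S-1}-x_i^S-\delta_i^S)\big)/n^S$;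 $\mathrm{ydef}_i^j=y_i^j-f_{\mathrm{vle},i}(P,T^j,\mathbf x^j)$; $\mathrm{edef}^j=H^j-n^jf_{\mathrm{hl}}(T^j,\mathbf x^j)$; $\mathrm{xsum}^j=x_C^j-1+\sum_{i=1}^{C-1}x_i^j$; $\mathrm{hold}^j=n^j-f_{\mathrm{holdup}}(L^{j-1})$ ($j=2,\dots,S$); collected as $g_\delta=(\mathrm{aux}^S_\delta,\dots,\mathrm{aux}^1_\delta,\mathbf{ydef}^1,\dots,\mathbf{ydef}^S,\mathrm{edef}^1,\dots,\mathrm{edef}^S,\mathrm{xsum}^1,\dots,\mathrm{xsum}^S,\mathrm{hold}^2,\dots,\mathrm{hold}^S)$ with $\mathbf{ydef}^j=(\mathrm{ydef}^j_1,\dots,\mathrm{ydef}^j_C)$. Differential variables $\xi=(n^1,\dots,n^S,\hat{\mathbf x}^1,\dots,\hat{\mathbf x}^S,H^1,\dots,H^S)$, $\hat{\mathbf x}^j=(x_1^j,\dots,x_{C-1}^j)$; algebraic variables $\eta=(V^S,\dots,V^1,\mathbf y^1,\dots,\mathbf y^S,T^1,\dots,T^S,x_C^1,\dots,x_C^S,L^1,\dots,L^{S-1})$. $D_\eta g_0$ is the Jacobian of $g_0$ with respect to $\eta$ (with $\xi$ and the controls held fixed). *)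

From HB Require Import structures.
From mathcomp Require Import all_boot all_order all_algebra.
From mathcomp Require Import all_classical all_reals all_analysis.
Set Implicit Arguments. Unset Strict Implicit. Unset Printing Implicit Defensive.
Import Order.TTheory GRing.Theory Num.Theory.
Import numFieldNormedType.Exports.
Local Open Scope classical_set_scope.
Local Open Scope ring_scope.

Section Column.
Variable R : realType.

Definition deriv_on (I : set R) (f f' : R -> R) : Prop :=
  forall t, I t ->
    (fun s => (f s - f t) / (s - t)) @ within (I `\ t) (nbhs t) --> f' t.

Definition C1_on (I : set R) (f : R -> R) : Prop :=
  exists f', deriv_on I f f' /\ {within I, continuous f'}.

(* continuously differentiable on a whole normed space U:
   differentiable everywhere and the derivative depends continuously on the
   point (tested on each direction; equivalent in finite dimension). *)
Definition C1 (U : normedModType R) (F : U -> R) : Prop :=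
  (forall p, differentiable F p) /\ (forall v, continuous (fun p => 'd F p v)).

(* Stages are numbered j = 1..S, components i = 1..C (as in the paper). *)

Definition Neta (S C : nat) : nat := (S + S * C + S + S + (S - 1))%N.

Definition at_ {n : nat} (v : 'rV[R]_n) (k : nat) : R :=
  if (insub k : option 'I_n) is Some i then v ord0 i else 0.

(* eta = (V^S,...,V^1, y^1,...,y^S, T^1,...,T^S, x_C^1,...,x_C^S, L^1,...,L^{S-1}) *)
Definition aV  (S C : nat) (e : 'rV[R]_(Neta S C)) (j : nat) : R := at_ e (S - j).
Definition ay  (S C : nat) (e : 'rV[R]_(Neta S C)) (j i : nat) : R :=
  at_ e (S + (j - 1) * C + (i - 1)).
Definition aT  (S C : nat) (e : 'rV[R]_(Neta S C)) (j : nat) : R :=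
  at_ e (S + S * C + (j - 1)).
Definition axC (S C : nat) (e : 'rV[R]_(Neta S C)) (j : nat) : R :=
  at_ e (S + S * C + S + (j - 1)).
Definition aL  (S C : nat) (e : 'rV[R]_(Neta S C)) (j : nat) : R :=
  at_ e (S + S * C + S + S + (j - 1)).

(* full composition x^j_i, i = 1..C: x_i^j (differential) for i < C, x_C^j from eta *)
Definition xfull (S C : nat) (xh : nat -> nat -> R) (e : 'rV[R]_(Neta S C))
  (j i : nat) : R := if (i < C)%N then xh j i else axC e j.

Definition xvec (S C : nat) (xh : nat -> nat -> R) (e : 'rV[R]_(Neta S C))
  (j : nat) : 'rV[R]_C := \row_(i < C) xfull xh e j i.+1.

Definition yvec (S C : nat) (e : 'rV[R]_(Neta S C)) (j : nat) : 'rV[R]_C :=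
  \row_(i < C) ay e j i.+1.

Definition aux0 (S C : nat) (eps : R) (n : nat -> R) (xh : nat -> nat -> R)
  (e : 'rV[R]_(Neta S C)) (j : nat) : R :=
  let x := xfull xh e in
  let y := ay e in
  let V := aV e in
  let L := aL e in
  if j == 1%N then
    (\sum_(1 <= i < C.+1) (L 1%N * (x 2%N i - x 1%N i) - V 1%N * (y 1%N i - x 1%N i)))
      / n 1%N
  else if j == S then
    (\sum_(1 <= i < C.+1) (eps * V S * (x S i - y S i)
                            + V (S - 1)%N * (y (S - 1)%N i - x S i))) / n S
  else
    (\sum_(1 <= i < C.+1) (L j * (x j.+1 i - x j i) - V j * (y j i - x j i)
                            + V (j - 1)%N * (y (j - 1)%N i - x j i))) / n j.

(* the algebraic right-hand side g_0, as a function of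
   the controls (eps, P), the differential variables (n, xhat, H)
   and the algebraic variables eta *)
Definition g0 (S C : nat)
  (fvle : nat -> R -> R -> 'rV[R]_C -> R) (fhl : R -> 'rV[R]_C -> R)
  (fholdup : R -> R) (eps P : R)
  (n : nat -> R) (xh : nat -> nat -> R) (H : nat -> R)
  (e : 'rV[R]_(Neta S C)) : 'rV[R]_(Neta S C) :=
  \row_(k < Neta S C)
    if (k < S)%N then aux0 eps n xh e (S - k)
    else if (k < S + S * C)%N then
      let j := ((k - S) %/ C).+1 in let i := ((k - S) %% C).+1 in
      ay e j i - fvle i P (aT e j) (xvec xh e j)
    else if (k < S + S * C + S)%N then
      let j := (k - (S + S * C)).+1 in
      H j - n j * fhl (aT e j) (xvec xh e j)
    else if (k < S + S * C + S + S)%N then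
      let j := (k - (S + S * C + S)).+1 in
      axC e j - 1 + \sum_(1 <= i < C) xh j i
    else
      let j := (k - (S + S * C + S + S)).+2 in
      n j - fholdup (aL e (j - 1)%N).

Definition jac_eta {N : nat} (F : 'rV[R]_N -> 'rV[R]_N) (e : 'rV[R]_N) : 'M[R]_N :=
  \matrix_(r < N, c < N) 'D_(delta_mx ord0 c) (fun z => F z ord0 r) e.

Definition odes_hold (S C : nat)
  (fhl : R -> 'rV[R]_C -> R) (fhv : R -> 'rV[R]_C -> R)
  (eps Q Tcond : R)
  (n : nat -> R) (xh : nat -> nat -> R) (e : 'rV[R]_(Neta S C))
  (dn : nat -> R) (dxh : nat -> nat -> R) (dH : nat -> R) : Prop :=
  let V := aV e in let L := aL e in let y := ay e in let T := aT e in
  let x := xvec xh e in let yv := yvec e in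
  [/\ dn 1%N = L 1%N - V 1%N,
      (forall j, (2 <= j <= S - 1)%N ->
         dn j = L j - V j - L (j - 1)%N + V (j - 1)%N),
      dn S = - eps * V S - L (S - 1)%N + V (S - 1)%N,
      (forall i, (1 <= i <= C - 1)%N ->
        [/\ dxh 1%N i = (L 1%N * (xh 2%N i - xh 1%N i) - V 1%N * (y 1%N i - xh 1%N i))
                         / n 1%N,
            (forall j, (2 <= j <= S - 1)%N ->
               dxh j i = (L j * (xh j.+1 i - xh j i) - V j * (y j i - xh j i)
                          + V (j - 1)%N * (y (j - 1)%N i - xh j i)) / n j) &
            dxh S i = (eps * V S * (xh S i - y S i)
                       + V (S - 1)%N * (y (S - 1)%N i - xh S i)) / n S])
  &
   [/\ dH 1%N = L 1%N * fhl (T 2%N) (x 2%N) - V 1%N * fhv (T 1%N) (yv 1%N) + Q,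
       (forall j, (2 <= j <= S - 1)%N ->
          dH j = L j * fhl (T j.+1) (x j.+1) - V j * fhv (T j) (yv j)
                 - L (j - 1)%N * fhl (T j) (x j) + V (j - 1)%N * fhv (T (j - 1)%N) (yv (j - 1)%N)) &
       dH S = (1 - eps) * V S * fhl Tcond (yv S) - V S * fhv (T S) (yv S)
              - L (S - 1)%N * fhl (T S) (x S) + V (S - 1)%N * fhv (T (S - 1)%N) (yv (S - 1)%N)]].

Definition solution_P0 (S C : nat) (I : set R)
  (fvle : nat -> R -> R -> 'rV[R]_C -> R) (fhl fhv : R -> 'rV[R]_C -> R)
  (fholdup : R -> R) (eps P Q Tcond : R -> R)
  (n : nat -> R -> R) (xh : nat -> nat -> R -> R) (H : nat -> R -> R)
  (eta : R -> 'rV[R]_(Neta S C)) : Prop :=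
  [/\ (forall j, (1 <= j <= S)%N -> C1_on I (n j) /\ C1_on I (H j)),
      (forall j i, (1 <= j <= S)%N -> (1 <= i <= C - 1)%N -> C1_on I (xh j i)),
      (forall k : 'I_(Neta S C), C1_on I (fun t => eta t ord0 k)) &
      exists (dn : nat -> R -> R) (dxh : nat -> nat -> R -> R) (dH : nat -> R -> R),
        [/\ (forall j, (1 <= j <= S)%N -> deriv_on I (n j) (dn j) /\ deriv_on I (H j) (dH j)),
            (forall j i, (1 <= j <= S)%N -> (1 <= i <= C - 1)%N ->
               deriv_on I (xh j i) (dxh j i)) &
            forall t, I t ->
              odes_hold fhl fhv (eps t) (Q t) (Tcond t)
                (fun j => n j t) (fun j i => xh j i t) (eta t)
                (fun j => dn j t) (fun j i => dxh j i t) (fun j => dH j t)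
              /\ g0 fvle fhl fholdup (eps t) (P t)
                   (fun j => n j t) (fun j i => xh j i t) (fun j => H j t) (eta t) = 0]].

End Column.

From HB Require Import structures.
From mathcomp Require Import all_boot all_order all_algebra.
From mathcomp Require Import all_classical all_reals all_analysis.
From mathcomp Require Import ring zify.
Import Order.TTheory GRing.Theory Num.Theory.
Import numFieldNormedType.Exports.
Local Open Scope classical_set_scope.
Local Open Scope ring_scope.

(* On a solution, g_0 does not depend on V^S.  V^S enters only aux^S, through
   eps V^S sum_i (x_i^S - y_i^S) / n^S, and that sum vanishes: given
   sum_i x_i^j = 1 (xsum), n^j aux^j telescopes to w^(j-1) - w^j, where w^0 = 0
   and w^j = V^j (sum_i y_i^j - 1) is the vapour excess (times eps for j = S),
   so aux = 0 forces w^j = 0 stage by stage, and finally sum_i y_i^S = 1.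
   Hence the V^S column of D_eta g_0 is zero. *)

Lemma det_col_eq0 (R : comPzRingType) (n : nat) (A : 'M[R]_n) (c : 'I_n) :
  (forall r, A r c = 0) -> \det A = 0.
Proof. by move=> Ac; rewrite (expand_det_col _ c) big1 // => r _; rewrite Ac mul0r. Qed.

Lemma derive_eq0_invariant (R : numFieldType) (V W : normedModType R)
    (f : V -> W) (a v : V) :
  (forall h : R, f (h *: v + a) = f a) -> 'D_v f a = 0.
Proof.
move=> fv; rewrite /derive.
have -> : (fun h : R => h^-1 *: ((f \o shift a) (h *: v) - f a)) = fun=> 0.
  by apply: funext => h; rewrite /= /shift fv subrr scaler0.
by rewrite lim_cst.
Qed.

Lemma det_jac_eta_eq0 (R : realType) (N : nat) (F : 'rV[R]_N -> 'rV[R]_N)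
    (e : 'rV[R]_N) (c : 'I_N) :
  (forall h : R, F (h *: delta_mx ord0 c + e) = F e) -> \det (jac_eta F e) = 0.
Proof.
move=> Fc; apply: (@det_col_eq0 _ _ _ c) => r; rewrite mxE.
by apply: derive_eq0_invariant => h; rewrite Fc.
Qed.

Lemma sum_mulrB (R : pzRingType) (I : Type) (r : seq I) (P : pred I) (a : R)
    (f g : I -> R) :
  \sum_(i <- r | P i) a * (f i - g i) =
  a * (\sum_(i <- r | P i) f i - \sum_(i <- r | P i) g i).
Proof. by rewrite -sumrB mulr_sumr. Qed.

Section VSDirection.
Variables (R : realType) (S C : nat).
Hypothesis hS : (2 <= S)%N.
Let S_gt0 : (0 < S)%N := ltnW hS.
Variable c0 : 'I_(Neta S C).
Hypothesis c0_eq0 : val c0 = 0%N.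
Variables (h : R) (e : 'rV[R]_(Neta S C)).
Let e' := h *: delta_mx ord0 c0 + e.

Lemma at_shift k : at_ e' k = at_ e k + (k == 0%N)%:R * h.
Proof.
rewrite /at_; case: insubP => [i _ <-|k_ge]; rewrite ?mxE /=.
  rewrite addrC mulrC; congr (_ + _ * _).
  by rewrite -c0_eq0; congr (_%:R); apply/eqP/eqP => [->|/val_inj].
case: eqP => [k0|_]; last by rewrite mul0r addr0.
by rewrite k0 -c0_eq0 ltn_ord in k_ge.
Qed.

Lemma at_shift_pos k : (0 < k)%N -> at_ e' k = at_ e k.
Proof. by rewrite lt0n at_shift => /negbTE ->; rewrite mul0r addr0. Qed.

Lemma aV_shift_lt j : (j < S)%N -> aV e' j = aV e j.
Proof. by move=> jS; apply: at_shift_pos; rewrite subn_gt0. Qed.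

Lemma aV_shift_top : aV e' S = aV e S + h.
Proof. by rewrite /aV subnn at_shift mul1r. Qed.

Lemma ay_shift : ay e' = ay e.
Proof.
by apply/funext => j; apply/funext => i; apply: at_shift_pos; rewrite -!addnA ltn_addr.
Qed.

Lemma aT_shift : aT e' = aT e.
Proof. by apply/funext => j; apply: at_shift_pos; rewrite -!addnA ltn_addr. Qed.

Lemma axC_shift : axC e' = axC e.
Proof. by apply/funext => j; apply: at_shift_pos; rewrite -!addnA ltn_addr. Qed.

Lemma aL_shift : aL e' = aL e.
Proof. by apply/funext => j; apply: at_shift_pos; rewrite -!addnA ltn_addr. Qed.

Lemma xfull_shift xh : xfull xh e' = xfull xh e.
Proof. by rewrite /xfull axC_shift. Qed.

Lemma xvec_shift xh : xvec xh e' = xvec xh e.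
Proof. by rewrite /xvec xfull_shift. Qed.

Variables (eps : R) (n : nat -> R) (xh : nat -> nat -> R).
Hypothesis top_balance : \sum_(1 <= i < C.+1) (xfull xh e S i - ay e S i) = 0.

Lemma aux0_shift j : (1 <= j <= S)%N -> aux0 eps n xh e' j = aux0 eps n xh e j.
Proof.
move=> /andP[j_ge1 j_leS]; rewrite /aux0 /= xfull_shift ay_shift aL_shift.
have [_|j_ne1] := eqVneq j 1%N; first by rewrite aV_shift_lt.
have [_|j_neS] := eqVneq j S; last first.
  have j_ltS : (j < S)%N by rewrite ltn_neqAle j_neS.
  by rewrite !aV_shift_lt // (leq_ltn_trans (leq_subr _ _)).
rewrite aV_shift_top aV_shift_lt ?ltn_subrL ?S_gt0 //; congr (_ / _).
apply/eqP; rewrite -subr_eq0 -sumrB.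
rewrite (eq_bigr (fun i => eps * h * (xfull xh e S i - ay e S i))) => [|i _];
  last by ring.
by rewrite -mulr_sumr top_balance mulr0.
Qed.

Lemma g0_shift fvle fhl fholdup P H :
  g0 fvle fhl fholdup eps P n xh H e' = g0 fvle fhl fholdup eps P n xh H e.
Proof.
apply/rowP => r; rewrite !mxE ay_shift aT_shift xvec_shift axC_shift aL_shift.
case: ifP => // r_ltS; apply: aux0_shift.
by rewrite subn_gt0 r_ltS leq_subr.
Qed.

End VSDirection.

Section MassBalance.
Variables (R : realType) (S C : nat).
Hypotheses (hS : (2 <= S)%N) (hC : (0 < C)%N).
Variables (fvle : nat -> R -> R -> 'rV[R]_C -> R) (fhl : R -> 'rV[R]_C -> R)
  (fholdup : R -> R) (eps P : R) (n : nat -> R) (xh : nat -> nat -> R)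
  (H : nat -> R) (e : 'rV[R]_(Neta S C)).
Hypothesis g0_eq0 : g0 fvle fhl fholdup eps P n xh H e = 0.

Let sum_x j := \sum_(1 <= i < C.+1) xfull xh e j i.
Let sum_y j := \sum_(1 <= i < C.+1) ay e j i.
Let vapour_excess j := aV e j * (sum_y j - 1).

Lemma sum_x_eq1 j : (1 <= j <= S)%N -> sum_x j = 1.
Proof.
move=> /andP[j_ge1 j_leS].
have k_lt : (S + S * C + S + (j - 1) < Neta S C)%N by rewrite /Neta; lia.
move/rowP/(_ (Ordinal k_lt)): g0_eq0; rewrite !mxE /=.
do 3 (rewrite ifF; last lia); rewrite ifT; last lia.
have -> : (S + S * C + S + (j - 1) - (S + S * C + S)).+1 = j by lia.
rewrite /sum_x big_nat_recr //= {2}/xfull ltnn.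
rewrite (eq_big_nat _ _ (fun i i_lim => _ : xfull xh e j i = xh j i));
  last by move=> i /andP[_ i_lt]; rewrite /xfull i_lt.
by move=> /eqP; rewrite addrAC subr_eq0 addrC => /eqP.
Qed.

Lemma aux0_eq0 j : (1 <= j <= S)%N -> aux0 eps n xh e j = 0.
Proof.
move=> /andP[j_ge1 j_leS]; have k_lt : (S - j < Neta S C)%N by rewrite /Neta; lia.
by move/rowP/(_ (Ordinal k_lt)): g0_eq0; rewrite !mxE /= ifT ?subKn //; lia.
Qed.

Lemma aux0_first : aux0 eps n xh e 1 = - vapour_excess 1 / n 1.
Proof.
rewrite /aux0 /= sumrB !sum_mulrB -/(sum_x 1) -/(sum_x 2) -/(sum_y 1).
by rewrite !sum_x_eq1 //; [rewrite /vapour_excess; congr (_ / _); ring | lia].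
Qed.

Lemma aux0_middle j : (0 < j)%N -> (j.+1 < S)%N ->
  aux0 eps n xh e j.+1 = (vapour_excess j - vapour_excess j.+1) / n j.+1.
Proof.
move=> j_gt0 j_ltS; rewrite /aux0 /= !ifF ?subn1 //=; try lia.
rewrite big_split /= sumrB !sum_mulrB.
rewrite -/(sum_x j.+1) -/(sum_x j.+2) -/(sum_y j.+1) -/(sum_y j).
by rewrite !sum_x_eq1; try lia; rewrite /vapour_excess; congr (_ / _); ring.
Qed.

Lemma aux0_top :
  aux0 eps n xh e S = (vapour_excess (S - 1) - eps * vapour_excess S) / n S.
Proof.
rewrite /aux0 /= eqxx ifF; last lia.
rewrite big_split /= -mulr_sumr sumrB !sum_mulrB.
rewrite -/(sum_x S) -/(sum_y S) -/(sum_y (S - 1)).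
by rewrite sum_x_eq1; try lia; rewrite /vapour_excess; congr (_ / _); ring.
Qed.

Hypothesis n_neq0 : forall j, (1 <= j <= S)%N -> n j != 0.

Lemma vapour_excess_eq0 j : (0 < j < S)%N -> vapour_excess j = 0.
Proof.
elim: j => [//|j IHj] j_range.
have : aux0 eps n xh e j.+1 = 0 by apply: aux0_eq0; lia.
have /negbTE : n j.+1 != 0 by apply: n_neq0; lia.
have [->|j_gt0] := posnP j => n_j.
  by rewrite aux0_first => /eqP; rewrite mulf_eq0 invr_eq0 n_j orbF oppr_eq0 => /eqP.
rewrite aux0_middle ?IHj //; try lia.
by move=> /eqP; rewrite mulf_eq0 invr_eq0 n_j orbF sub0r oppr_eq0 => /eqP.
Qed.

Hypotheses (eps_neq0 : eps != 0) (aV_top_neq0 : aV e S != 0).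

Lemma sum_y_top : sum_y S = 1.
Proof.
have n_S : n S != 0 by apply: n_neq0; lia.
have : aux0 eps n xh e S = 0 by apply: aux0_eq0; lia.
rewrite aux0_top vapour_excess_eq0; last lia.
move=> /eqP; rewrite mulf_eq0 invr_eq0 (negbTE n_S) orbF sub0r oppr_eq0.
by rewrite !mulf_eq0 (negbTE eps_neq0) (negbTE aV_top_neq0) subr_eq0 => /eqP.
Qed.

Lemma top_balance : \sum_(1 <= i < C.+1) (xfull xh e S i - ay e S i) = 0.
Proof. by rewrite sumrB -/(sum_x S) -/(sum_y S) sum_y_top sum_x_eq1 ?subrr //; lia. Qed.

End MassBalance.

Theorem mainTheorem5 (R : realType) (S C : nat) (hS : (2 <= S)%N) (hC : (2 <= C)%N)
  (I : set R) (hI : is_interval I)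
  (fvle : nat -> R -> R -> 'rV[R]_C -> R) (fhl fhv : R -> 'rV[R]_C -> R)
  (fholdup : R -> R)
  (hfvle : forall i, (1 <= i <= C)%N ->
     C1 (fun p : R * R * 'rV[R]_C => fvle i p.1.1 p.1.2 p.2))
  (hfhl : C1 (fun p : R * 'rV[R]_C => fhl p.1 p.2))
  (hfhv : C1 (fun p : R * 'rV[R]_C => fhv p.1 p.2))
  (hfholdup : C1 fholdup)
  (eps P Q Tcond : R -> R)
  (heps : C1_on I eps) (hP : C1_on I P) (hQ : C1_on I Q) (hTcond : C1_on I Tcond)
  (n : nat -> R -> R) (xh : nat -> nat -> R -> R) (H : nat -> R -> R)
  (eta : R -> 'rV[R]_(Neta S C))
  (hsol : solution_P0 I fvle fhl fhv fholdup eps P Q Tcond n xh H eta)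
  (heps0 : forall t, I t -> eps t != 0)
  (hn0 : forall t j, I t -> (1 <= j <= S)%N -> n j t != 0)
  (hV0 : forall t j, I t -> (1 <= j <= S)%N -> aV (eta t) j != 0) :
  forall t, I t ->
    \det (jac_eta
            (g0 fvle fhl fholdup (eps t) (P t)
               (fun j => n j t) (fun j i => xh j i t) (fun j => H j t))
            (eta t)) = 0.
Proof.
move=> t It.
case: hsol => _ _ _ [dn [dxh [dH [_ _ sol_at]]]].
have g0_t := (sol_at t It).2.
have Neta_gt0 : (0 < Neta S C)%N by rewrite /Neta -!addnA; exact: ltn_addr (ltnW hS).
apply: (@det_jac_eta_eq0 _ _ _ _ (Ordinal Neta_gt0)) => h.
apply: (@g0_shift _ _ _ hS (Ordinal Neta_gt0) erefl).
apply: (@top_balance _ _ _ hS (ltnW hC) _ _ _ _ _ _ _ _ _ g0_t) => [j j_range||].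
- exact: hn0.
- exact: heps0.
- by apply: hV0; rewrite // leqnn andbT ltnW.
Qed.
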